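(* Let $\phi$ be a flow of a compact metric space $X$. (1) If $\phi$ is expansive on $X\setminus Sing(\phi)$, then $\phi$ is singular-expansive. (2) If $\phi$ is singular-expansive and $Sing(\phi)$ is open in $X$, then $\phi$ is expansive on $X\setminus Sing(\phi)$.
   Context: A flow is a continuous $\phi:\mathbb{R}\times X\to X$ with $\phi_0=\mathrm{id}$, $\phi_{t+s}=\phi_t\circ\phi_s$; $\phi_I(x)=\{\phi_t(x):t\in I\}$; $Sing(\phi)$ is the set of fixed points; $dist(z,A)=\inf_{a\in A}d(z,a)$, with $dist(z,\emptyset)=diam(X)$. $\phi$ is expansive on $\Lambda\subset X$ if for every $\epsilon>0$ there is $\delta>0$ such that whenever $x,y\in\Lambda$ and a continuous $s:\mathbb{R}\to\mathbb{R}$ with $s(0)=0$ satisfy $d(\phi_t(x),\phi_{s(t)}(y))\le\delta$ for all $t$, then $y\in\phi_{[-\epsilon,\epsilon]}(x)$. $\phi$ is singular-expansive if for every $\epsilon>0$ there is $\delta>0$ such that whenever $x,y\in X$ and an increasing homeomorphism $s:\mathbb{R}\to\mathbb{R}$ satisfy $d(\phi_t(x),\phi_{s(t)}(y))\le\delta\,dist(\phi_t(x),Sing(\phi))$ for all $t$, then $\phi_{s(t_0)}(y)\in\phi_{[t_0-\epsilon,t_0+\epsilon]}(x)$ for some $t_0\in\mathbb{R}$. *)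

From Stdlib Require Import Reals List ClassicalEpsilon.
From Coquelicot Require Import Coquelicot.
Open Scope R_scope.

Definition is_metric {X : Type} (d : X -> X -> R) : Prop :=
  (forall x y, 0 <= d x y) /\
  (forall x y, d x y = 0 <-> x = y) /\
  (forall x y, d x y = d y x) /\
  (forall x y z, d x z <= d x y + d y z).

Definition metric_open {X : Type} (d : X -> X -> R) (U : X -> Prop) : Prop :=
  forall x, U x -> exists r, 0 < r /\ forall y, d x y < r -> U y.

Definition metric_compact {X : Type} (d : X -> X -> R) : Prop :=
  forall (I : Type) (U : I -> X -> Prop),
    (forall i, metric_open d (U i)) ->
    (forall x, exists i, U i x) ->
    exists l : list I, forall x, exists i, In i l /\ U i x.

Definition flow_continuous {X : Type} (d : X -> X -> R) (phi : R -> X -> X) : Prop :=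
  forall t x eps, 0 < eps -> exists delta, 0 < delta /\
    forall s y, Rabs (s - t) < delta -> d x y < delta ->
      d (phi t x) (phi s y) < eps.

Definition is_flow {X : Type} (d : X -> X -> R) (phi : R -> X -> X) : Prop :=
  flow_continuous d phi /\
  (forall x, phi 0 x = x) /\
  (forall t s x, phi (t + s) x = phi t (phi s x)).

Definition Sing {X : Type} (phi : R -> X -> X) : X -> Prop :=
  fun x => forall t, phi t x = x.

Definition in_orbit_segment {X : Type} (phi : R -> X -> X) (a b : R) (x y : X) : Prop :=
  exists u, a <= u <= b /\ y = phi u x.

Definition diam {X : Type} (d : X -> X -> R) : R :=
  real (Lub_Rbar (fun r => exists x y, r = d x y)).

(* dist(z,A) = inf_{a in A} d(z,a), and dist(z, emptyset) = diam(X). *)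
Definition dist {X : Type} (d : X -> X -> R) (z : X) (A : X -> Prop) : R :=
  if excluded_middle_informative (exists a, A a)
  then real (Glb_Rbar (fun r => exists a, A a /\ r = d z a))
  else diam d.

Definition increasing_homeo (s : R -> R) : Prop :=
  (forall a b, a < b -> s a < s b) /\
  continuity s /\
  exists g : R -> R, continuity g /\ (forall t, g (s t) = t) /\ (forall t, s (g t) = t).

Definition expansive_on {X : Type} (d : X -> X -> R) (phi : R -> X -> X)
    (Lambda : X -> Prop) : Prop :=
  forall eps, 0 < eps -> exists delta, 0 < delta /\
    forall x y (s : R -> R), Lambda x -> Lambda y ->
      continuity s -> s 0 = 0 ->
      (forall t, d (phi t x) (phi (s t) y) <= delta) ->
      in_orbit_segment phi (- eps) eps x y.

Definition singular_expansive {X : Type} (d : X -> X -> R) (phi : R -> X -> X) : Prop :=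
  forall eps, 0 < eps -> exists delta, 0 < delta /\
    forall x y (s : R -> R), increasing_homeo s ->
      (forall t, d (phi t x) (phi (s t) y) <= delta * dist d (phi t x) (Sing phi)) ->
      exists t0, in_orbit_segment phi (t0 - eps) (t0 + eps) x (phi (s t0) y).

From Pilot Require Import Defs.
From Stdlib Require Import Reals Lra List ClassicalEpsilon Classical.
From Coquelicot Require Import Coquelicot.
Open Scope R_scope.

(* Part (1): dist(., Sing) is bounded on X, so a shadowing within δ dist(., Sing) is a
   shadowing within a uniform δ', and expansiveness off Sing applies to the reparametrization
   s - s(0); when x or phi_{s(0)}(y) is singular the hypothesis at t = 0 forces them equal.

   Part (2): if Sing is open, X \ Sing is compact, so dist(., Sing) is bounded below on it and
   there are no short almost-periodic returns: for small h, every regular z is moved a uniform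
   distance by phi_r with h <= |r| <= 3h.  A continuous reparametrization s of a close enough
   shadowing then moves by less than h on short windows and strictly forward over windows of
   length u0, so its window average is an increasing homeomorphism shadowing equally well.
   Singular expansiveness then puts y on the orbit of x, and the time offset between the two
   orbits, a continuous function that can never cross the gap [h, 3h], stays below h. *)

Lemma Glb_Rbar_bounds (E : R -> Prop) c e : (forall x, E x -> c <= x) -> E e ->
  c <= real (Glb_Rbar E) <= e.
Proof.
  intros Hc He. destruct (Glb_Rbar_correct E) as [H1 H2].
  assert (A : Rbar_le (Glb_Rbar E) e) by (apply H1; auto).
  assert (B : Rbar_le c (Glb_Rbar E)) by (apply H2; intros x Hx; simpl; apply Hc; auto).
  destruct (Glb_Rbar E); simpl in *; try contradiction; lra.
Qed.

Lemma Lub_Rbar_bounds (E : R -> Prop) M e : (forall x, E x -> x <= M) -> E e ->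
  e <= real (Lub_Rbar E) <= M.
Proof.
  intros Hc He. destruct (Lub_Rbar_correct E) as [H1 H2].
  assert (A : Rbar_le e (Lub_Rbar E)) by (apply H1; auto).
  assert (B : Rbar_le (Lub_Rbar E) M) by (apply H2; intros x Hx; simpl; apply Hc; auto).
  destruct (Lub_Rbar E); simpl in *; try contradiction; lra.
Qed.

Lemma IVT_between (f : R -> R) a b c : continuity f -> (f a - c) * (f b - c) <= 0 ->
  exists t, Rmin a b <= t <= Rmax a b /\ f t = c.
Proof.
  intros Hf H. assert (Hg : continuity (fun x => f x - c)).
  { apply continuity_minus; auto. apply continuity_const. intros x y; auto. }
  destruct (Rle_or_lt a b) as [Hab|Hab].
  - destruct (IVT_cor _ a b Hg Hab H) as [t [Ht Ht']]. exists t.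
    rewrite Rmin_left, Rmax_right by lra. split; auto. lra.
  - destruct (IVT_cor _ b a Hg (Rlt_le _ _ Hab)) as [t [Ht Ht']]. lra.
    exists t. rewrite Rmin_right, Rmax_left by lra. split; auto. lra.
Qed.

Lemma Rabs_lt_of_gap (g : R -> R) a b t0 t1 : continuity g -> 0 < a < b ->
  Rabs (g t0) < a ->
  (forall t, Rmin t0 t1 <= t <= Rmax t0 t1 -> ~ (a <= Rabs (g t) <= b)) ->
  Rabs (g t1) < a.
Proof.
  intros Hg Hab H0 Hgap. destruct (Rlt_or_le (Rabs (g t1)) a) as [L|L]; auto. exfalso.
  assert (L2 : b < Rabs (g t1)).
  { destruct (Rlt_or_le b (Rabs (g t1))); auto. exfalso. eapply Hgap.
    2: split; eauto. split. apply Rmin_r. apply Rmax_r. }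
  apply Rabs_def2 in H0. destruct H0 as [H0a H0b].
  destruct (Rle_or_lt 0 (g t1)) as [P|P].
  - rewrite Rabs_right in L2 by lra.
    destruct (IVT_between g t0 t1 ((a + b) / 2)) as [t [Ht Ht']]; auto. nra.
    apply (Hgap t Ht). rewrite Ht', Rabs_right; lra.
  - rewrite Rabs_left in L2 by lra.
    destruct (IVT_between g t0 t1 (- ((a + b) / 2))) as [t [Ht Ht']]; auto. nra.
    apply (Hgap t Ht). rewrite Ht', Rabs_left; lra.
Qed.

Section Expanding.
Variables (f : R -> R) (k : R).
Hypothesis (Hf : continuity f) (Hk : 0 < k).
Hypothesis Hexp : forall a b, a <= b -> k * (b - a) <= f b - f a.

Lemma expanding_Rabs a b : k * Rabs (b - a) <= Rabs (f b - f a).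
Proof.
  destruct (Rle_or_lt a b) as [L|L].
  - pose proof (Hexp a b L). rewrite !Rabs_right by nra. lra.
  - pose proof (Hexp b a (Rlt_le _ _ L)). rewrite !Rabs_left1 by nra. lra.
Qed.

Lemma expanding_surjective y : exists t, f t = y.
Proof.
  set (r := Rabs (y - f 0) / k + 1).
  assert (Hr : k * r = Rabs (y - f 0) + k) by (unfold r; field; lra).
  assert (Hr0 : 0 < r).
  { assert (0 <= Rabs (y - f 0) / k) by (apply Rdiv_le_0_compat; [apply Rabs_pos|lra]).
    unfold r; lra. }
  pose proof (Hexp (- r) 0 ltac:(lra)). pose proof (Hexp 0 r ltac:(lra)).
  pose proof (Rle_abs (y - f 0)). pose proof (Rle_abs (- (y - f 0))).
  rewrite Rabs_Ropp in *.
  destruct (IVT_between f (- r) r y Hf) as [t [_ Ht]]; [nra | eauto].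
Qed.

Lemma increasing_homeo_of_expanding : increasing_homeo f.
Proof.
  split; [intros a b L; pose proof (Hexp a b (Rlt_le _ _ L)); nra |].
  split; [exact Hf |].
  destruct (choice (fun y t => f t = y) expanding_surjective) as [g Hg].
  assert (Hgf : forall t, g (f t) = t).
  { intros t. pose proof (expanding_Rabs t (g (f t))) as H. rewrite Hg in H.
    replace (f t - f t) with 0 in H by ring. rewrite Rabs_R0 in H.
    pose proof (Rabs_pos (g (f t) - t)).
    assert (Rabs (g (f t) - t) = 0) by nra.
    destruct (Req_dec (g (f t) - t) 0); [lra | exfalso; now apply Rabs_no_R0 in H2]. }
  exists g. split; [| split; assumption].
  intros y0 e He. exists (e * k). split; [nra |]. intros y [_ Hy]. simpl in *.
  unfold R_dist in *. pose proof (expanding_Rabs (g y0) (g y)) as H. rewrite !Hg in H.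
  apply Rmult_lt_reg_l with k; lra.
Qed.

End Expanding.

Definition slow_on (h u : R) (s : R -> R) : Prop :=
  forall t v, 0 <= v <= u -> Rabs (s (t + v) - s t) < h.

Lemma continuity_increment (s : R -> R) t :
  continuity s -> continuity (fun u => s (t + u) - s t).
Proof.
  intros Hs u. apply continuity_pt_minus; [| apply continuity_pt_const; now intros a b].
  apply (continuity_pt_comp (fun u => t + u) s); [| apply Hs].
  apply continuity_pt_plus; [apply continuity_pt_const; now intros a b | apply continuity_pt_id].
Qed.

Definition window_avg (s : R -> R) (u t : R) : R := (RInt s 0 (t + u) - RInt s 0 t) / u.

Section WindowAverage.
Variables (s : R -> R) (u : R).
Hypothesis (Hs : continuity s) (Hu : 0 < u).

Lemma is_derive_RInt_0 x : is_derive (fun x => RInt s 0 x) x (s x).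
Proof.
  apply (is_derive_RInt s _ 0 x).
  - apply filter_forall. intros b. apply (RInt_correct (V := R_CompleteNormedModule)).
    apply ex_RInt_continuous. intros z _. apply continuity_pt_filterlim, Hs.
  - apply continuity_pt_filterlim, Hs.
Qed.

Lemma window_avg_derive t : is_derive (window_avg s u) t ((s (t + u) - s t) / u).
Proof.
  unfold window_avg, Rdiv.
  apply (is_derive_ext (fun t => / u * (RInt s 0 (t + u) - RInt s 0 t))).
  { intros; simpl; ring. }
  replace ((s (t + u) - s t) * / u) with (/ u * (s (t + u) - s t)) by ring.
  apply is_derive_scal, (is_derive_minus (fun t => RInt s 0 (t + u))).
  - replace (s (t + u)) with (1 * s (t + u)) by ring.
    apply (is_derive_comp (fun x => RInt s 0 x) (fun t => t + u)).
    + apply is_derive_RInt_0.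
    + auto_derive; auto; ring.
  - apply is_derive_RInt_0.
Qed.

Lemma window_avg_continuous : continuity (window_avg s u).
Proof.
  intros t. apply continuity_pt_filterlim, (ex_derive_continuous (window_avg s u)).
  eexists; apply window_avg_derive.
Qed.

Lemma window_avg_mean_value t : exists c, t <= c <= t + u /\ window_avg s u t = s c.
Proof.
  destruct (MVT_gen (fun x => RInt s 0 x) t (t + u) s) as [c [Hc Hc']].
  - intros x _. apply is_derive_RInt_0.
  - intros x _. apply continuity_pt_filterlim, (ex_derive_continuous (fun x => RInt s 0 x)).
    eexists; apply is_derive_RInt_0.
  - rewrite Rmin_left, Rmax_right in Hc by lra. exists c. split; auto.
    unfold window_avg. rewrite Hc'. field. lra.
Qed.

Lemma window_avg_near h : slow_on h u s ->
  forall t, Rabs (window_avg s u t - s t) < h.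
Proof.
  intros Hslow t. destruct (window_avg_mean_value t) as [c [Hc ->]].
  replace c with (t + (c - t)) by ring. apply Hslow. lra.
Qed.

Lemma window_avg_increasing_homeo b : 0 < b -> (forall t, b <= s (t + u) - s t) ->
  increasing_homeo (window_avg s u).
Proof.
  intros Hb Hincr. apply (increasing_homeo_of_expanding _ (b / u)).
  - apply window_avg_continuous.
  - apply Rdiv_lt_0_compat; lra.
  - intros a c Hac. destruct (MVT_gen (window_avg s u) a c (fun t => (s (t + u) - s t) / u))
      as [t [_ Ht]].
    + intros x _. apply window_avg_derive.
    + intros x _. apply window_avg_continuous.
    + rewrite Ht. apply Rmult_le_compat_r; [lra |].
      apply Rmult_le_compat_r; [left; apply Rinv_0_lt_compat; lra | apply Hincr].
Qed.

End WindowAverage.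

Lemma finite_min_pos {A : Type} (P : A -> R -> Prop) (l : list A) :
  (forall x m m', 0 < m' <= m -> P x m -> P x m') ->
  (forall x, In x l -> exists m, 0 < m /\ P x m) ->
  exists m, 0 < m /\ forall x, In x l -> P x m.
Proof.
  intros Hmono. induction l as [|a l IH]; intros H.
  - exists 1. split; [lra | intros x []].
  - destruct (H a (or_introl eq_refl)) as [ma [Hma Pa]].
    destruct IH as [m [Hm Pm]]; [intros x Hx; apply H; now right |].
    exists (Rmin ma m). split; [now apply Rmin_glb_lt |].
    intros x [<-|Hx].
    + apply Hmono with ma; [split; [now apply Rmin_glb_lt | apply Rmin_l] | exact Pa].
    + apply Hmono with m; [split; [now apply Rmin_glb_lt | apply Rmin_r] | now apply Pm].
Qed.

Lemma pos_choice {A : Type} (P : A -> R -> Prop) :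
  (forall x, exists r, 0 < r /\ P x r) -> exists f : A -> R, forall x, 0 < f x /\ P x (f x).
Proof. apply choice. Qed.

Section CompactFlow.
Variables (X : Type) (d : X -> X -> R) (phi : R -> X -> X).
Hypotheses (Hd : is_metric d) (Hc : metric_compact d) (Hphi : is_flow d phi).

Lemma d_nonneg x y : 0 <= d x y. Proof. apply Hd. Qed.
Lemma d_eq0 x y : d x y = 0 -> x = y. Proof. apply Hd. Qed.
Lemma d_refl x : d x x = 0. Proof. now apply Hd. Qed.
Lemma d_sym x y : d x y = d y x. Proof. apply Hd. Qed.
Lemma d_triangle x y z : d x z <= d x y + d y z. Proof. apply Hd. Qed.

Lemma d_pos_neq x y : x <> y -> 0 < d x y.
Proof.
  intros H. destruct (d_nonneg x y) as [|E]; [assumption |].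
  exfalso. apply H, d_eq0. now symmetry.
Qed.

Lemma phi_0 x : phi 0 x = x. Proof. apply Hphi. Qed.
Lemma phi_add t s x : phi (t + s) x = phi t (phi s x). Proof. apply Hphi. Qed.

Lemma phi_shift a b x : phi b x = phi (b - a) (phi a x).
Proof. rewrite <- phi_add. f_equal. ring. Qed.

Lemma phi_opp t x : phi (- t) (phi t x) = x.
Proof. rewrite <- phi_add, Rplus_opp_l. apply phi_0. Qed.

Lemma phi_nonsing t x : ~ Sing phi x -> ~ Sing phi (phi t x).
Proof.
  intros H HS. apply H. intros u.
  rewrite <- (phi_opp t x) at 1. rewrite <- phi_add, (Rplus_comm u), phi_add, HS.
  apply phi_opp.
Qed.

Lemma nonsing_moves x : ~ Sing phi x -> exists T, 0 < T /\ phi T x <> x.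
Proof.
  intros H. apply not_all_ex_not in H. destruct H as [t Ht].
  destruct (Rtotal_order t 0) as [Hl|[->|Hg]].
  - exists (- t). split; [lra |]. intros E. apply Ht.
    rewrite <- E at 1. rewrite <- phi_add, Rplus_opp_r. apply phi_0.
  - exfalso. apply Ht, phi_0.
  - exists t. auto.
Qed.

Lemma finite_ball_cover (S : X -> Prop) (rho : X -> R) :
  metric_open d S -> (forall x, ~ S x -> 0 < rho x) ->
  exists l : list X, (forall x, In x l -> ~ S x) /\
    forall z, S z \/ exists x, In x l /\ d x z < rho x.
Proof.
  intros HS Hr.
  set (U := fun x w => S w \/ (~ S x /\ d x w < rho x)).
  destruct (Hc X U) as [l Hl].
  - intros x w [Hw|[Hx Hw]].
    + destruct (HS w Hw) as [r [Hr0 Hr1]]. exists r. split; auto.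
      intros y Hy. left. auto.
    + exists (rho x - d x w). split; [lra |]. intros y Hy. right. split; auto.
      pose proof (d_triangle x w y). lra.
  - intros x. exists x. destruct (classic (S x)) as [H|H]; [now left |].
    right. split; auto. rewrite d_refl. now apply Hr.
  - exists (filter (fun x => if excluded_middle_informative (S x) then false else true) l).
    split.
    + intros x Hx. apply filter_In in Hx. destruct Hx as [_ Hx].
      destruct (excluded_middle_informative (S x)); congruence.
    + intros z. destruct (Hl z) as [i [Hi [Hz|[Hni Hz]]]]; [now left |].
      right. exists i. split; auto. apply filter_In. split; auto.
      destruct (excluded_middle_informative (S i)); tauto.
Qed.

Lemma phi_uniform_cont_at t0 g : 0 < g -> exists b, 0 < b /\ forall z w r,
  d z w < b -> Rabs (r - t0) < b -> d (phi t0 z) (phi r w) < g.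
Proof.
  intros Hg.
  destruct (pos_choice (fun x dx => forall s y, Rabs (s - t0) < dx -> d x y < dx ->
     d (phi t0 x) (phi s y) < g / 2)) as [f Hf].
  { intros x. apply (proj1 Hphi t0 x (g / 2)). lra. }
  destruct (finite_ball_cover (fun _ => False) (fun x => f x / 2)) as [l [_ Hl]].
  { intros x []. } { intros x _. specialize (Hf x). lra. }
  destruct (finite_min_pos (fun x m => m <= f x / 2) l) as [b [Hb Hbl]].
  { intros; lra. } { intros x _. exists (f x / 2). specialize (Hf x). split; lra. }
  exists b. split; auto. intros z w r Hzw Hr.
  destruct (Hl z) as [[]|[x [Hx Hxz]]].
  specialize (Hbl x Hx). destruct (Hf x) as [Hfx Hfx'].
  pose proof (d_triangle x z w).
  assert (H1 : d (phi t0 x) (phi r w) < g / 2) by (apply Hfx'; lra).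
  assert (H2 : d (phi t0 x) (phi t0 z) < g / 2).
  { apply Hfx'; [rewrite Rminus_diag, Rabs_R0 |]; lra. }
  pose proof (d_triangle (phi t0 z) (phi t0 x) (phi r w)). rewrite d_sym in H2. lra.
Qed.

Lemma phi_small_time g : 0 < g -> exists b, 0 < b /\ forall z w r,
  d z w < b -> Rabs r < b -> d z (phi r w) < g.
Proof.
  intros Hg. destruct (phi_uniform_cont_at 0 g Hg) as [b [Hb H]]. exists b. split; auto.
  intros z w r H1 H2. rewrite <- (phi_0 z). apply H; auto. now rewrite Rminus_0_r.
Qed.

Lemma phi_uniform_cont T g : 0 < g -> exists b, 0 < b /\ forall z w r,
  Rabs r <= T -> d z w < b -> d (phi r z) (phi r w) < g.
Proof.
  intros Hg.
  assert (Hf : exists f : R -> posreal, forall t z w r,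
    d z w < f t -> Rabs (r - t) < f t -> d (phi t z) (phi r w) < g / 2).
  { destruct (choice (fun t (b : posreal) => forall z w r,
      d z w < b -> Rabs (r - t) < b -> d (phi t z) (phi r w) < g / 2)) as [f Hf].
    - intros t. destruct (phi_uniform_cont_at t (g / 2)) as [b [Hb H]]; [lra |].
      exists (mkposreal b Hb). exact H.
    - now exists f. }
  destruct Hf as [f Hf].
  destruct (compactness_value_1d (- T) T f) as [b Hb].
  exists b. split; [apply cond_pos |]. intros z w r Hr Hzw.
  apply Rabs_le_between in Hr.
  specialize (Hb r Hr). apply NNPP in Hb. destruct Hb as [t [_ [Hrt Hbt]]].
  assert (H1 : d (phi t z) (phi r z) < g / 2).
  { apply Hf; [rewrite d_refl; apply cond_pos | exact Hrt]. }
  assert (H2 : d (phi t z) (phi r w) < g / 2) by (apply Hf; [lra | exact Hrt]).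
  pose proof (d_triangle (phi r z) (phi t z) (phi r w)). rewrite d_sym in H1. lra.
Qed.

Lemma d_bounded : exists M, 0 <= M /\ forall a b, d a b <= M.
Proof.
  destruct (finite_ball_cover (fun _ => False) (fun _ => 1)) as [l [_ Hl]].
  { intros x []. } { intros; lra. }
  assert (Hmono : forall r m m', 0 < m' <= m -> r <= / m -> r <= / m').
  { intros r m m' Hm H. eapply Rle_trans; [apply H | now apply Rinv_le_contravar]. }
  destruct (finite_min_pos (fun x m => forall y, In y l -> d x y <= / m) l) as [m [Hm Hml]].
  { intros x m m' Hm H y Hy. eapply Hmono; eauto. }
  { intros x _. apply (finite_min_pos (fun y m => d x y <= / m)).
    - intros y m m' Hm H. eapply Hmono; eauto.
    - intros y _. destruct (d_nonneg x y) as [Hpos|E].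
      + exists (/ d x y). split; [now apply Rinv_0_lt_compat |]. rewrite Rinv_inv. lra.
      + exists 1. rewrite <- E, Rinv_1. lra. }
  exists (2 + / m). pose proof (Rinv_0_lt_compat m Hm). split; [lra |].
  intros a b. destruct (Hl a) as [[]|[xa [Ha Hda]]]. destruct (Hl b) as [[]|[xb [Hb Hdb]]].
  pose proof (Hml xa Ha xb Hb). rewrite d_sym in Hda.
  pose proof (d_triangle a xa b). pose proof (d_triangle xa xb b). lra.
Qed.

Lemma d_le_diam a b : d a b <= diam d.
Proof.
  destruct d_bounded as [M [_ HM]]. unfold diam.
  apply (Lub_Rbar_bounds _ M (d a b)); [intros r [x [y ->]]; apply HM | now exists a, b].
Qed.

Lemma dist_Sing_le z a : Sing phi a -> Defs.dist d z (Sing phi) <= d z a.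
Proof.
  intros Ha. unfold Defs.dist. destruct (excluded_middle_informative _) as [_|n].
  - apply (Glb_Rbar_bounds _ 0); [intros r [b [_ ->]]; apply d_nonneg | now exists a].
  - exfalso. apply n. now exists a.
Qed.

Lemma dist_Sing_ge z c : (exists a, Sing phi a) -> (forall a, Sing phi a -> c <= d z a) ->
  c <= Defs.dist d z (Sing phi).
Proof.
  intros [a Ha] H. unfold Defs.dist. destruct (excluded_middle_informative _) as [_|n].
  - apply (Glb_Rbar_bounds _ c (d z a)); [intros r [b [Hb ->]]; auto | now exists a].
  - exfalso. apply n. now exists a.
Qed.

Lemma dist_Sing_bounded : exists M, 0 <= M /\ forall z, Defs.dist d z (Sing phi) <= M.
Proof.
  destruct d_bounded as [M [HM0 HM]]. exists M. split; auto. intros z. unfold Defs.dist.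
  destruct (excluded_middle_informative _) as [[a Ha]|_].
  - eapply Rle_trans; [| apply (HM z a)].
    apply (Glb_Rbar_bounds _ 0); [intros r [b [_ ->]]; apply d_nonneg | now exists a].
  - unfold diam. apply (Lub_Rbar_bounds _ M (d z z)); [intros r [x [y ->]]; apply HM |].
    now exists z, z.
Qed.

Lemma expansive_off_Sing_singular_expansive :
  expansive_on d phi (fun x => ~ Sing phi x) -> singular_expansive d phi.
Proof.
  intros HE eps Heps. destruct (HE eps Heps) as [dE [HdE HE']].
  destruct dist_Sing_bounded as [M [HM0 HM]].
  set (del := Rmin (1 / 2) (dE / (M + 1))).
  assert (Hdel0 : 0 < del) by (apply Rmin_glb_lt; [lra | apply Rdiv_lt_0_compat; lra]).
  assert (Hdel1 : del <= 1 / 2) by apply Rmin_l.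
  assert (Hdel2 : del * M <= dE).
  { assert (del <= dE / (M + 1)) by apply Rmin_r.
    apply Rle_trans with (dE / (M + 1) * M); [apply Rmult_le_compat_r; lra |].
    apply Rmult_le_reg_r with (M + 1); [lra |].
    replace (dE / (M + 1) * M * (M + 1)) with (dE * M) by (field; lra). nra. }
  exists del. split; [exact Hdel0 |].
  intros x y s [_ [Hs _]] Hclose. exists 0. specialize (Hclose 0) as Hclose0.
  rewrite phi_0 in Hclose0. set (y' := phi (s 0) y) in *.
  destruct (classic (Sing phi x)) as [Sx|Nx].
  - pose proof (dist_Sing_le x x Sx) as H. rewrite d_refl in H.
    pose proof (d_nonneg x y').
    assert (E : x = y') by (apply d_eq0; nra).
    exists 0. split; [lra |]. now rewrite phi_0.
  - destruct (classic (Sing phi y')) as [Sy|Ny].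
    + exfalso. pose proof (dist_Sing_le x y' Sy). pose proof (d_nonneg x y').
      assert (E : x = y') by (apply d_eq0; nra). apply Nx. now rewrite E.
    + destruct (HE' x y' (fun t => s t - s 0) Nx Ny) as [u [Hu Hu']].
      * apply continuity_minus; [exact Hs | now apply continuity_const].
      * ring.
      * intros t. unfold y'. rewrite <- phi_add. replace (s t - s 0 + s 0) with (s t) by ring.
        eapply Rle_trans; [apply Hclose |]. eapply Rle_trans; [| apply Hdel2].
        apply Rmult_le_compat_l; [lra | apply HM].
      * exists u. split; [lra | exact Hu'].
Qed.

Lemma nonsing_away_from_Sing x : ~ Sing phi x ->
  exists r, 0 < r /\ forall a, Sing phi a -> r <= d x a.
Proof.
  intros Hx. destruct (nonsing_moves x Hx) as [T [HT HTx]].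
  set (D := d x (phi T x)).
  assert (HD : 0 < D) by (apply d_pos_neq; congruence).
  destruct (phi_uniform_cont_at T (D / 3)) as [b [Hb Hb']]; [lra |].
  exists (Rmin b (D / 3)). split; [now apply Rmin_glb_lt; lra |].
  intros a Ha. destruct (Rle_lt_dec (Rmin b (D / 3)) (d x a)) as [H|H]; auto. exfalso.
  assert (H1 : d (phi T x) (phi T a) < D / 3).
  { apply Hb'; [eapply Rlt_le_trans; [apply H | apply Rmin_l] |].
    rewrite Rminus_diag, Rabs_R0. auto. }
  rewrite (Ha T) in H1. pose proof (Rmin_r b (D / 3)).
  pose proof (d_triangle x a (phi T x)). rewrite (d_sym a) in *. unfold D in *. lra.
Qed.

Lemma dist_Sing_lower_bound : metric_open d (Sing phi) -> (exists z, ~ Sing phi z) ->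
  exists c, 0 < c /\ forall z, ~ Sing phi z -> c <= Defs.dist d z (Sing phi).
Proof.
  intros Hop [z0 Hz0].
  destruct (classic (exists a, Sing phi a)) as [Hne|Hem].
  - destruct (pos_choice (fun x r => ~ Sing phi x -> forall a, Sing phi a -> r <= d x a))
      as [rho Hrho].
    { intros x. destruct (classic (Sing phi x)) as [S|S]; [exists 1; split; [lra | tauto] |].
      destruct (nonsing_away_from_Sing x S) as [r [Hr Hr']]. exists r. auto. }
    destruct (finite_ball_cover (Sing phi) (fun x => rho x / 2)) as [l [Hl1 Hl2]]; auto.
    { intros x _. specialize (Hrho x). lra. }
    destruct (finite_min_pos (fun x m => m <= rho x / 2) l) as [c [Hc0 Hcl]].
    { intros; lra. } { intros x _. exists (rho x / 2). specialize (Hrho x). split; lra. }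
    exists c. split; auto. intros z Hz. apply dist_Sing_ge; auto.
    intros a Ha. destruct (Hl2 z) as [S|[x [Hx Hxz]]]; [contradiction |].
    pose proof (proj2 (Hrho x) (Hl1 x Hx) a Ha). pose proof (Hcl x Hx).
    pose proof (d_triangle x z a). lra.
  - (* With no singularity, dist is the diameter, which is positive since z0 moves. *)
    destruct (nonsing_moves z0 Hz0) as [T [HT HTx]].
    exists (d z0 (phi T z0)). split; [apply d_pos_neq; congruence |].
    intros z _. unfold Defs.dist. destruct (excluded_middle_informative _) as [e|_].
    + contradiction.
    + apply d_le_diam.
Qed.

Lemma return_iterate w r g0 T : 0 <= r ->
  (forall t, 0 <= t <= T -> d (phi t w) (phi t (phi r w)) < g0) ->
  forall j : nat, INR j * r <= T -> d w (phi (INR j * r) w) <= INR j * g0.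
Proof.
  intros Hr Hclose. induction j as [|j IH]; intros Hj.
  - simpl. rewrite Rmult_0_l, phi_0, d_refl. lra.
  - rewrite S_INR in *. pose proof (pos_INR j).
    assert (Hj' : INR j * r <= T) by nra.
    replace ((INR j + 1) * r) with (INR j * r + r) by ring. rewrite phi_add.
    pose proof (Hclose (INR j * r) ltac:(split; nra)).
    pose proof (d_triangle w (phi (INR j * r) w) (phi (INR j * r) (phi r w))).
    specialize (IH Hj'). lra.
Qed.

(* Iterate the return about T / r times; uniform continuity of phi on [0, T] bounds the
   accumulated error. *)
Lemma short_returns_bounded T g : 0 <= T -> 0 < g -> exists hmax, 0 < hmax /\
  forall h, 0 < h -> exists b, 0 < b /\
  forall w r, h <= r <= hmax -> d w (phi r w) < b -> d w (phi T w) < g.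
Proof.
  intros HT Hg. destruct (phi_small_time (g / 2)) as [bL [HbL HL]]; [lra |].
  exists (bL / 2). split; [lra |]. intros h Hh.
  assert (HTh : 0 <= T / h) by (apply Rdiv_le_0_compat; lra).
  set (g0 := g / (2 * (T / h + 1))).
  assert (Hg0 : 0 < g0) by (apply Rdiv_lt_0_compat; lra).
  destruct (phi_uniform_cont T g0 Hg0) as [b [Hb HU]].
  exists b. split; [exact Hb |]. intros w r Hr Hwr.
  destruct (nfloor_ex (T / r)) as [k Hk]; [apply Rdiv_le_0_compat; lra |].
  assert (Hk1 : INR k * r <= T).
  { apply Rmult_le_reg_r with (/ r); [apply Rinv_0_lt_compat; lra |].
    rewrite Rmult_assoc, Rinv_r by lra. unfold Rdiv in Hk. lra. }
  assert (Hk2 : T < INR k * r + r).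
  { apply Rmult_lt_reg_r with (/ r); [apply Rinv_0_lt_compat; lra |].
    rewrite Rmult_plus_distr_r, Rmult_assoc, Rinv_r by lra. unfold Rdiv in Hk. lra. }
  assert (Hkg : INR k * g0 < g / 2).
  { assert (INR k <= T / h).
    { apply Rle_trans with (T / r); [lra |]. unfold Rdiv.
      apply Rmult_le_compat_l; [lra | apply Rinv_le_contravar; lra]. }
    pose proof (pos_INR k).
    apply Rmult_lt_reg_r with (2 * (T / h + 1)); [lra |].
    replace (INR k * g0 * (2 * (T / h + 1))) with (INR k * g) by (unfold g0; field; lra).
    replace (g / 2 * (2 * (T / h + 1))) with (g * (T / h + 1)) by (field; lra).
    nra. }
  assert (Hit : d w (phi (INR k * r) w) <= INR k * g0).
  { apply (return_iterate w r g0 T); [lra | | exact Hk1].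
    intros t Ht. apply HU; [rewrite Rabs_right; lra | exact Hwr]. }
  set (w' := phi (INR k * r) w) in *.
  assert (Hw' : d w' (phi (T - INR k * r) w') < g / 2).
  { apply HL; [rewrite d_refl; lra | rewrite Rabs_right; lra]. }
  unfold w' in Hw'. rewrite <- phi_shift in Hw'.
  pose proof (d_triangle w w' (phi T w)). unfold w' in *. lra.
Qed.

Definition uniformly_displacing (h al : R) : Prop :=
  forall z, ~ Sing phi z -> forall r, h <= Rabs r <= 3 * h -> al <= d z (phi r z).

Lemma locally_displacing x : ~ Sing phi x -> exists rho, 0 < rho /\ exists hx, 0 < hx /\
  forall h, 0 < h <= hx -> exists al, 0 < al /\
  forall w, d x w < rho -> forall r, h <= r <= 3 * h -> al <= d w (phi r w).
Proof.
  intros Hx. destruct (nonsing_moves x Hx) as [T [HT HTx]].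
  set (D := d x (phi T x)).
  assert (HD : 0 < D) by (apply d_pos_neq; congruence).
  destruct (phi_uniform_cont_at T (D / 3)) as [b [Hb Hb']]; [lra |].
  exists (Rmin b (D / 3)). split; [now apply Rmin_glb_lt; lra |].
  destruct (short_returns_bounded T (D / 3)) as [hmax [Hhmax Hret]]; [lra | lra |].
  exists (hmax / 3). split; [lra |]. intros h Hh.
  destruct (Hret h) as [al [Hal Hal']]; [lra |].
  exists al. split; [exact Hal |]. intros w Hw r Hr.
  destruct (Rle_lt_dec al (d w (phi r w))) as [H|H]; [exact H | exfalso].
  assert (H1 : d (phi T x) (phi T w) < D / 3).
  { apply Hb'; [eapply Rlt_le_trans; [apply Hw | apply Rmin_l] |].
    rewrite Rminus_diag, Rabs_R0. auto. }
  assert (H2 : d w (phi T w) < D / 3) by (apply (Hal' w r); [lra | exact H]).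
  pose proof (Rmin_r b (D / 3)). pose proof (d_triangle x w (phi T x)).
  pose proof (d_triangle w (phi T w) (phi T x)). rewrite (d_sym (phi T w)) in *.
  unfold D in *. lra.
Qed.

Lemma uniformly_displacing_small_times : metric_open d (Sing phi) ->
  exists h0, 0 < h0 /\ forall h, 0 < h <= h0 -> exists al, 0 < al /\ uniformly_displacing h al.
Proof.
  intros Hop.
  set (P := fun x rho hx => forall h, 0 < h <= hx -> exists al, 0 < al /\
    forall w, d x w < rho -> forall r, h <= r <= 3 * h -> al <= d w (phi r w)).
  destruct (pos_choice (fun x rho => ~ Sing phi x -> exists hx, 0 < hx /\ P x rho hx))
    as [rho Hrho].
  { intros x. destruct (classic (Sing phi x)) as [S|S]; [exists 1; split; [lra | tauto] |].
    destruct (locally_displacing x S) as [r [Hr Hr']]. now exists r. }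
  destruct (pos_choice (fun x hx => ~ Sing phi x -> P x (rho x) hx)) as [hx Hhx].
  { intros x. destruct (classic (Sing phi x)) as [S|S]; [exists 1; split; [lra | tauto] |].
    destruct (proj2 (Hrho x) S) as [r [Hr Hr']]. now exists r. }
  destruct (finite_ball_cover (Sing phi) rho) as [l [Hl1 Hl2]]; auto.
  { intros x _. apply Hrho. }
  destruct (finite_min_pos (fun x m => m <= hx x) l) as [h0 [Hh0 Hh0l]].
  { intros; lra. } { intros x _. exists (hx x). split; [apply Hhx | lra]. }
  exists h0. split; [exact Hh0 |]. intros h Hh.
  destruct (finite_min_pos (fun x m => forall w, d x w < rho x ->
    forall r, h <= r <= 3 * h -> m <= d w (phi r w)) l) as [al [Hal Hall]].
  { intros x m m' Hm H w Hw r Hr. specialize (H w Hw r Hr). lra. }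
  { intros x Hx. apply (proj2 (Hhx x) (Hl1 x Hx)). specialize (Hh0l x Hx). lra. }
  exists al. split; [exact Hal |].
  assert (Hpos : forall z, ~ Sing phi z -> forall r, h <= r <= 3 * h -> al <= d z (phi r z)).
  { intros z Hz r Hr. destruct (Hl2 z) as [S|[x [Hx Hxz]]]; [contradiction |].
    apply (Hall x Hx z Hxz r Hr). }
  intros z Hz r Hr. destruct (Rle_or_lt 0 r) as [H0|H0].
  - rewrite Rabs_right in Hr by lra. now apply Hpos.
  - rewrite Rabs_left in Hr by lra.
    pose proof (Hpos (phi r z) (phi_nonsing r z Hz) (- r) Hr) as H.
    now rewrite phi_opp, d_sym in H.
Qed.

Definition shadows (del : R) (x y : X) (s : R -> R) : Prop :=
  forall t, d (phi t x) (phi (s t) y) <= del.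

Lemma shadows_le del del' x y s : del <= del' -> shadows del x y s -> shadows del' x y s.
Proof. intros Hle H t. specialize (H t). lra. Qed.

Lemma shadows_orbit_dist del x y s : shadows del x y s -> forall t t',
  d (phi (s t) y) (phi (s t') y) <= 2 * del + d (phi t x) (phi t' x) /\
  d (phi t x) (phi t' x) <= 2 * del + d (phi (s t) y) (phi (s t') y).
Proof.
  intros Hsh t t'. pose proof (Hsh t). pose proof (Hsh t').
  pose proof (d_triangle (phi (s t) y) (phi t x) (phi (s t') y)).
  pose proof (d_triangle (phi t x) (phi t' x) (phi (s t') y)).
  pose proof (d_triangle (phi t x) (phi (s t) y) (phi t' x)).
  pose proof (d_triangle (phi (s t) y) (phi (s t') y) (phi t' x)).
  pose proof (d_sym (phi (s t) y) (phi t x)). pose proof (d_sym (phi t' x) (phi (s t') y)).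
  split; lra.
Qed.

Lemma shadowing_slow h al : 0 < h -> 0 < al -> uniformly_displacing h al ->
  exists u0, 0 < u0 <= h /\ forall x y s, ~ Sing phi y -> continuity s ->
  shadows (al / 4) x y s -> slow_on h u0 s.
Proof.
  intros Hh Hal Hdisp. destruct (phi_small_time (al / 3)) as [b [Hb Hsmall]]; [lra |].
  exists (Rmin (b / 2) h). split; [split; [apply Rmin_glb_lt; lra | apply Rmin_r] |].
  intros x y s Hy Hs Hsh t u Hu. pose proof (Rmin_l (b / 2) h).
  apply (Rabs_lt_of_gap (fun u => s (t + u) - s t) h (3 * h) 0 u).
  - now apply continuity_increment.
  - lra.
  - rewrite Rplus_0_r, Rminus_diag, Rabs_R0. lra.
  - intros tau Htau Hgap. rewrite Rmin_left, Rmax_right in Htau by lra.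
    pose proof (Hdisp (phi (s t) y) (phi_nonsing _ _ Hy) _ Hgap) as H1.
    rewrite <- phi_shift in H1.
    pose proof (proj1 (shadows_orbit_dist _ _ _ _ Hsh t (t + tau))) as H2.
    assert (H3 : d (phi t x) (phi (t + tau) x) < al / 3).
    { rewrite (phi_shift t (t + tau) x).
      apply Hsmall; [rewrite d_refl | rewrite Rabs_right]; lra. }
    lra.
Qed.

Lemma shadowing_displaces u0 al : 0 < u0 -> 0 < al -> uniformly_displacing (u0 / 3) al ->
  exists b, 0 < b /\ forall x y s, ~ Sing phi x -> shadows (al / 4) x y s ->
  forall t, b <= Rabs (s (t + u0) - s t).
Proof.
  intros Hu0 Hal Hdisp. destruct (phi_small_time (al / 3)) as [b [Hb Hsmall]]; [lra |].
  exists b. split; [exact Hb |]. intros x y s Hx Hsh t.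
  destruct (Rle_or_lt b (Rabs (s (t + u0) - s t))) as [L|L]; [exact L | exfalso].
  assert (H1 : d (phi (s t) y) (phi (s (t + u0)) y) < al / 3).
  { rewrite (phi_shift (s t) (s (t + u0)) y). apply Hsmall; [rewrite d_refl |]; lra. }
  pose proof (proj2 (shadows_orbit_dist _ _ _ _ Hsh t (t + u0))) as H2.
  assert (H3 : al <= d (phi t x) (phi (t + u0) x)).
  { rewrite (phi_shift t (t + u0) x). replace (t + u0 - t) with u0 by ring.
    apply Hdisp; [now apply phi_nonsing | rewrite Rabs_right; lra]. }
  lra.
Qed.

Lemma shadowing_forward h u0 al : 0 < u0 <= h -> 0 < al -> uniformly_displacing (u0 / 3) al ->
  exists del, 0 < del <= al / 4 /\ forall x y s, ~ Sing phi x -> continuity s ->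
  shadows del x y s -> slow_on h u0 s -> forall t, 0 <= s (t + u0) - s t.
Proof.
  intros Hu0 Hal Hdisp. destruct (phi_uniform_cont h (al / 3)) as [b [Hb HU]]; [lra |].
  exists (Rmin (al / 4) (b / 2)). split; [split; [apply Rmin_glb_lt; lra | apply Rmin_l] |].
  intros x y s Hx Hs Hsh Hslow t.
  pose proof (Rmin_l (al / 4) (b / 2)). pose proof (Rmin_r (al / 4) (b / 2)).
  destruct (Rle_or_lt 0 (s (t + u0) - s t)) as [|Hneg]; [assumption | exfalso].
  (* If s runs backwards over [t, t + u0], then at some t + u the reparametrized orbit of y
     lags by exactly 2 u0 / 3, so the orbit of x nearly returns after time 2 u0 / 3. *)
  destruct (IVT_between (fun u => u - (s (t + u) - s t)) 0 u0 (2 * u0 / 3)) as [u [Hu Hfu]].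
  { apply continuity_minus; [intros ?; apply continuity_pt_id | now apply continuity_increment]. }
  { rewrite Rplus_0_r, Rminus_diag. nra. }
  rewrite Rmin_left, Rmax_right in Hu by lra. simpl in Hfu.
  set (v := s t - s (t + u)).
  assert (Hv : Rabs v <= h). { unfold v. rewrite Rabs_minus_sym. left. apply Hslow. lra. }
  set (p := phi t x). set (q := phi (s t) y).
  assert (Ep : phi (2 * u0 / 3) (phi (- v) p) = phi (t + u) x).
  { unfold p. rewrite <- !phi_add. f_equal. unfold v. lra. }
  assert (Eq : phi (s (t + u)) y = phi (- v) q).
  { unfold q. rewrite <- phi_add. f_equal. unfold v. ring. }
  assert (H1 : d (phi (- v) p) (phi (- v) q) < al / 3).
  { apply HU; [now rewrite Rabs_Ropp | pose proof (Hsh t); unfold p, q; lra]. }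
  pose proof (Hsh (t + u)) as H2. rewrite Eq in H2.
  assert (H3 : al <= d (phi (- v) p) (phi (2 * u0 / 3) (phi (- v) p))).
  { apply Hdisp; [unfold p; now apply phi_nonsing, phi_nonsing | rewrite Rabs_right; lra]. }
  rewrite Ep in H3. pose proof (d_triangle (phi (- v) p) (phi (- v) q) (phi (t + u) x)).
  pose proof (d_sym (phi (- v) q) (phi (t + u) x)). lra.
Qed.

Lemma shadowing_reparametrization : metric_open d (Sing phi) -> forall eta, 0 < eta ->
  exists del, 0 < del /\ forall x y s, ~ Sing phi x -> ~ Sing phi y -> continuity s ->
  s 0 = 0 -> shadows del x y s ->
  exists sg, increasing_homeo sg /\ Rabs (sg 0) < eta /\
  forall t, d (phi t x) (phi (sg t) y) < eta.
Proof.
  intros Hop eta Heta.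
  destruct (uniformly_displacing_small_times Hop) as [h0 [Hh0 Hdisp]].
  destruct (phi_small_time (eta / 2)) as [bL [HbL Hsmall]]; [lra |].
  pose proof (Rmin_l h0 (Rmin (bL / 2) eta)). pose proof (Rmin_r h0 (Rmin (bL / 2) eta)).
  pose proof (Rmin_l (bL / 2) eta). pose proof (Rmin_r (bL / 2) eta).
  set (h := Rmin h0 (Rmin (bL / 2) eta)) in *.
  assert (Hh : 0 < h) by (repeat apply Rmin_glb_lt; lra).
  destruct (Hdisp h) as [al [Hal Hdisp_h]]; [lra |].
  destruct (shadowing_slow h al Hh Hal Hdisp_h) as [u0 [Hu0 Hslow]].
  destruct (Hdisp (u0 / 3)) as [al' [Hal' Hdisp_u0]]; [lra |].
  destruct (shadowing_displaces u0 al') as [b [Hb Hstep]]; [lra | lra | exact Hdisp_u0 |].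
  destruct (shadowing_forward h u0 al') as [delF [HdelF Hfwd]]; [lra | lra | exact Hdisp_u0 |].
  pose proof (Rmin_l (Rmin (al / 4) delF) (eta / 2)).
  pose proof (Rmin_r (Rmin (al / 4) delF) (eta / 2)).
  pose proof (Rmin_l (al / 4) delF). pose proof (Rmin_r (al / 4) delF).
  set (del := Rmin (Rmin (al / 4) delF) (eta / 2)) in *.
  assert (Hdel : 0 < del) by (repeat apply Rmin_glb_lt; lra).
  exists del. split; [exact Hdel |]. intros x y s Hx Hy Hs Hs0 Hsh.
  assert (Hsl : slow_on h u0 s) by (apply (Hslow x y); auto; eapply shadows_le; [| eauto]; lra).
  assert (Hincr : forall t, b <= s (t + u0) - s t).
  { intros t. pose proof (Hstep x y s Hx ltac:(eapply shadows_le; [| eauto]; lra) t).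
    pose proof (Hfwd x y s Hx Hs ltac:(eapply shadows_le; [| eauto]; lra) Hsl t).
    rewrite Rabs_right in * by lra. lra. }
  pose proof (window_avg_near s u0 Hs (proj1 Hu0) h Hsl) as Hnear.
  exists (window_avg s u0). split; [exact (window_avg_increasing_homeo s u0 Hs (proj1 Hu0) b Hb Hincr) |].
  split.
  - specialize (Hnear 0). rewrite Hs0, Rminus_0_r in Hnear. lra.
  - intros t. specialize (Hnear t). pose proof (Hsh t).
    assert (d (phi (s t) y) (phi (window_avg s u0 t) y) < eta / 2).
    { rewrite (phi_shift (s t) (window_avg s u0 t) y). apply Hsmall; [rewrite d_refl |]; lra. }
    pose proof (d_triangle (phi t x) (phi (s t) y) (phi (window_avg s u0 t) y)). lra.
Qed.

Lemma offset_small_along_orbit h al x g t0 : 0 < h -> uniformly_displacing h al ->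
  ~ Sing phi x -> continuity g -> (forall t, d (phi t x) (phi (g t) (phi t x)) < al) ->
  Rabs (g t0) < h -> forall t, Rabs (g t) < h.
Proof.
  intros Hh Hdisp Hx Hg Hclose H0 t.
  apply (Rabs_lt_of_gap g h (3 * h) t0 t Hg); [lra | exact H0 |].
  intros tau _ Hgap. specialize (Hclose tau).
  pose proof (Hdisp _ (phi_nonsing tau x Hx) _ Hgap). lra.
Qed.

Lemma singular_expansive_expansive_off_Sing :
  singular_expansive d phi -> metric_open d (Sing phi) ->
  expansive_on d phi (fun x => ~ Sing phi x).
Proof.
  intros Hse Hop eps Heps.
  destruct (classic (exists z, ~ Sing phi z)) as [Hne|Hem].
  2:{ exists 1. split; [lra |]. intros x y s Hx. exfalso. eauto. }
  destruct (dist_Sing_lower_bound Hop Hne) as [c [Hc0 Hdist]].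
  destruct (uniformly_displacing_small_times Hop) as [h0 [Hh0 Hdisp]].
  pose proof (Rmin_l h0 (eps / 3)). pose proof (Rmin_r h0 (eps / 3)).
  set (h := Rmin h0 (eps / 3)) in *.
  assert (Hh : 0 < h) by (apply Rmin_glb_lt; lra).
  destruct (Hdisp h) as [al [Hal Hdisp_h]]; [lra |].
  destruct (Hse (h / 2)) as [dse [Hdse Hse']]; [lra |].
  pose proof (Rmin_l (dse * c) (Rmin al h)). pose proof (Rmin_r (dse * c) (Rmin al h)).
  pose proof (Rmin_l al h). pose proof (Rmin_r al h).
  set (eta := Rmin (dse * c) (Rmin al h)) in *.
  assert (Heta : 0 < eta) by (repeat apply Rmin_glb_lt; nra).
  destruct (shadowing_reparametrization Hop eta Heta) as [del [Hdel Hrep]].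
  exists del. split; [exact Hdel |]. intros x y s Hx Hy Hs Hs0 Hsh.
  destruct (Hrep x y s Hx Hy Hs Hs0 Hsh) as [sg [Hsg [Hsg0 Hsgx]]].
  destruct (Hse' x y sg Hsg) as [t0 [u [Hu Hu']]].
  { intros t. specialize (Hsgx t). pose proof (Hdist _ (phi_nonsing t x Hx)).
    assert (dse * c <= dse * Defs.dist d (phi t x) (Sing phi)) by (apply Rmult_le_compat_l; lra).
    lra. }
  set (w0 := u - sg t0).
  assert (Ey : y = phi w0 x).
  { unfold w0. rewrite <- (phi_opp (sg t0) y), Hu', <- phi_add. f_equal. ring. }
  set (g := fun t => sg t + w0 - t).
  assert (Hg0 : Rabs (g 0) < h).
  { apply (offset_small_along_orbit h al x g t0 Hh Hdisp_h Hx).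
    - apply continuity_minus; [apply continuity_plus; [apply Hsg | apply continuity_const] |
        intros ?; apply continuity_pt_id]. now intros a b.
    - intros t. specialize (Hsgx t). rewrite Ey, <- phi_add in Hsgx.
      unfold g. rewrite <- phi_add. replace (sg t + w0 - t + t) with (sg t + w0) by ring. lra.
    - unfold g, w0. replace (sg t0 + (u - sg t0) - t0) with (u - t0) by ring.
      apply Rabs_def1; lra. }
  exists w0. split; [| exact Ey]. unfold g in Hg0. rewrite Rminus_0_r in Hg0.
  apply Rabs_def2 in Hg0. apply Rabs_def2 in Hsg0. lra.
Qed.

End CompactFlow.

Theorem mainTheorem14 (X : Type) (d : X -> X -> R) (phi : R -> X -> X)
  (Hd : is_metric d) (Hc : metric_compact d) (Hphi : is_flow d phi) :
  (expansive_on d phi (fun x => ~ Sing phi x) -> singular_expansive d phi) /\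
  (singular_expansive d phi -> metric_open d (Sing phi) ->
     expansive_on d phi (fun x => ~ Sing phi x)).
Proof.
  split.
  - exact (expansive_off_Sing_singular_expansive X d phi Hd Hc Hphi).
  - exact (singular_expansive_expansive_off_Sing X d phi Hd Hc Hphi).
Qed.
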